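(* The element $\Delta(\Lambda)$ lies in $\mathcal{I}_L\otimes\mathcal{I}_R$ and belongs to the cotensor product of $\mathcal{I}_L$ and $\mathcal{I}_R$: $(1\otimes\tau_R)(\Delta(\Lambda))=(\tau_L\otimes1)(\Delta(\Lambda))$ in $U_q(\mathfrak{sl}_2)^{\otimes3}$.
   Context: Let $\mathbb{K}$ be a field and $q\in\mathbb{K}$ not a root of unity. $U_q(\mathfrak{sl}_2)$ is the associative $\mathbb{K}$-algebra with generators $E,F,K,K^{-1}$ and relations $KK^{-1}=K^{-1}K=1$, $KE=q^2EK$, $KF=q^{-2}FK$, $EF-FE=\frac{K-K^{-1}}{q-q^{-1}}$, with Casimir element $\Lambda=(q-q^{-1})^2EF+q^{-1}K+qK^{-1}$ and coproduct $\Delta(E)=E\otimes1+K\otimes E$, $\Delta(F)=F\otimes K^{-1}+1\otimes F$, $\Delta(K^{\pm1})=K^{\pm1}\otimes K^{\pm1}$. $\mathcal{I}_R$ is the subalgebra generated by $EK^{-1},F,K^{-1},\Lambda$, with algebra morphism $\tau_R:\mathcal{I}_R\to U_q(\mathfrak{sl}_2)\otimes\mathcal{I}_R$: $\tau_R(EK^{-1})=K^{-1}\otimes EK^{-1}$, $\tau_R(F)=K\otimes F-q^{-3}(q-q^{-1})^2F^2K\otimes EK^{-1}+q^{-1}(q+q^{-1})FK\otimes K^{-1}-q^{-1}FK\otimes\Lambda$, $\tau_R(K^{-1})=1\otimes K^{-1}-q^{-1}(q-q^{-1})^2F\otimes EK^{-1}$, $\tau_R(\Lambda)=1\otimes\Lambda$.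 $\mathcal{I}_L$ is the subalgebra generated by $E,FK,K,\Lambda$, with algebra morphism $\tau_L:\mathcal{I}_L\to\mathcal{I}_L\otimes U_q(\mathfrak{sl}_2)$: $\tau_L(E)=E\otimes K$, $\tau_L(FK)=FK\otimes K^{-1}-q^{-1}(q-q^{-1})^2E\otimes F^2K+q(q+q^{-1})K\otimes F-q\Lambda\otimes F$, $\tau_L(K)=K\otimes1-q^{-1}(q-q^{-1})^2E\otimes FK$, $\tau_L(\Lambda)=\Lambda\otimes1$. *)

(* U_q(sl_2)^{(x) n} is modelled through its universal
   property: n mutually commuting copies of the generators E,F,K,K^{-1},
   each satisfying the defining relations, in an arbitrary K-algebra. *)
From HB Require Import structures.
From mathcomp Require Import all_boot all_algebra.
Set Implicit Arguments. Unset Strict Implicit. Unset Printing Implicit Defensive.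
Import GRing.Theory.
Local Open Scope ring_scope.

Record copy (A : Type) := Copy { cE : A; cF : A; cK : A; cKi : A }.

Definition gens (A : Type) (c : copy A) : seq A := [:: cE c; cF c; cK c; cKi c].

Definition Uq_rel (K : fieldType) (q : K) (A : algType K) (c : copy A) : Prop :=
  [/\ cK c * cKi c = 1, cKi c * cK c = 1,
      cK c * cE c = q ^+ 2 *: (cE c * cK c),
      cK c * cF c = q ^- 2 *: (cF c * cK c)
    & cE c * cF c - cF c * cE c = (q - q^-1)^-1 *: (cK c - cKi c)].

(* two copies commute elementwise (distinct tensor factors) *)
Definition commute_copies (A : nzRingType) (c d : copy A) : Prop :=
  {in gens c & gens d, forall x y, x * y = y * x}.

Definition casimir (K : fieldType) (q : K) (A : algType K) (c : copy A) : A :=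
  (q - q^-1) ^+ 2 *: (cE c * cF c) + q^-1 *: cK c + q *: cKi c.

(* generators of I_R : E K^{-1}, F, K^{-1}, Lambda *)
Inductive genR := REKi | RF | RKi | RLam.
(* generators of I_L : E, F K, K, Lambda *)
Inductive genL := LE | LFK | LK | LLam.

Definition evalR (K : fieldType) (q : K) (A : algType K) (c : copy A) (g : genR) : A :=
  match g with
  | REKi => cE c * cKi c
  | RF => cF c
  | RKi => cKi c
  | RLam => casimir q c
  end.

Definition evalL (K : fieldType) (q : K) (A : algType K) (c : copy A) (g : genL) : A :=
  match g with
  | LE => cE c
  | LFK => cF c * cK c
  | LK => cK c
  | LLam => casimir q c
  end.

(* tau_R on generators; c = the U_q(sl_2) tensor factor, d = the I_R factor;
   a (x) b is rendered as a_c * b_d *)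
Definition tauR (K : fieldType) (q : K) (A : algType K) (c d : copy A) (g : genR) : A :=
  match g with
  | REKi => cKi c * (cE d * cKi d)
  | RF => cK c * cF d
          - (q ^- 3 * (q - q^-1) ^+ 2) *: ((cF c ^+ 2 * cK c) * (cE d * cKi d))
          + (q^-1 * (q + q^-1)) *: ((cF c * cK c) * cKi d)
          - q^-1 *: ((cF c * cK c) * casimir q d)
  | RKi => cKi d - (q^-1 * (q - q^-1) ^+ 2) *: (cF c * (cE d * cKi d))
  | RLam => casimir q d
  end.

(* tau_L on generators; c = the I_L factor, d = the U_q(sl_2) factor *)
Definition tauL (K : fieldType) (q : K) (A : algType K) (c d : copy A) (g : genL) : A :=
  match g with
  | LE => cE c * cK d
  | LFK => (cF c * cK c) * cKi d
           - (q^-1 * (q - q^-1) ^+ 2) *: (cE c * (cF d ^+ 2 * cK d))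
           + (q * (q + q^-1)) *: (cK c * cF d)
           - q *: (casimir q c * cF d)
  | LK => cK c - (q^-1 * (q - q^-1) ^+ 2) *: (cE c * (cF d * cK d))
  | LLam => casimir q c
  end.

(* Delta(Lambda) in U (x) U, where c1, c2 are the two tensor factors;
   Delta(E) = E(x)1 + K(x)E, Delta(F) = F(x)K^{-1} + 1(x)F, Delta(K^{+-1}) = K^{+-1}(x)K^{+-1} *)
Definition DeltaLambda (K : fieldType) (q : K) (A : algType K) (c1 c2 : copy A) : A :=
  (q - q^-1) ^+ 2 *: ((cE c1 + cK c1 * cE c2) * (cF c1 * cKi c2 + cF c2))
  + q^-1 *: (cK c1 * cK c2) + q *: (cKi c1 * cKi c2).

Definition not_root_of_unity (K : fieldType) (q : K) : Prop :=
  forall n : nat, (0 < n)%N -> q ^+ n != 1.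

(* Write Delta(Lambda) = sum_i l_i (x) r_i with l = (Lambda, K, E, FK) in I_L and
   r = (K^-1, Lambda - (q + q^-1) K^-1, (q - q^-1)^2 F, (q - q^-1)^2 q^-2 EK^-1)
   in I_R; this only uses KF = q^-2 FK to move F past K across the two factors,
   after which the K (x) K^-1 terms cancel.  Both coactions are then given by one
   4x4 matrix M over U_q(sl_2): tau_R(r) = M r and tau_L(l) = l M.  Hence
   (1 (x) tau_R)(Delta(Lambda)) = l (M r) = (l M) r = (tau_L (x) 1)(Delta(Lambda))
   is just associativity of matrix multiplication. *)

From HB Require Import structures.
From mathcomp Require Import all_boot all_algebra ssrAC.
From mathcomp Require Import ring.
Set Implicit Arguments. Unset Strict Implicit. Unset Printing Implicit Defensive.
Import GRing.Theory.
Local Open Scope ring_scope.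

Section Casimir.

Variables (K : fieldType) (q : K).

Definition DeltaLambda_rep : seq (K * seq genL * seq genR) :=
  [:: (1, [:: LLam], [:: RKi]); (1, [:: LK], [:: RLam]);
      (- (q + q^-1), [:: LK], [:: RKi]); ((q - q^-1) ^+ 2, [:: LE], [:: RF]);
      ((q - q^-1) ^+ 2 * q^-2, [:: LFK], [:: REKi])].

Variable A : algType K.

Definition IL_row (f : genL -> A) : 'rV[A]_4 :=
  \row_j [:: f LLam; f LK; f LE; f LFK]`_j.

Definition IR_col (g : genR -> A) : 'cV[A]_4 :=
  \col_i [:: g RKi; g RLam - (q + q^-1) *: g RKi; (q - q^-1) ^+ 2 *: g RF;
             ((q - q^-1) ^+ 2 * q^-2) *: g REKi]`_i.

Definition coaction_mx (d : copy A) : 'M[A]_4 :=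
  let a := q^-1 * (q - q^-1) ^+ 2 in
  \matrix_(i, j) (nth [::] [::
    [:: 1; 0; 0; - q *: cF d];
    [:: 0; 1; 0; (q * (q + q^-1)) *: cF d];
    [:: 0; - a *: (cF d * cK d); cK d; - a *: (cF d ^+ 2 * cK d)];
    [:: 0; 0; 0; cKi d]] i)`_j.

Lemma big_DeltaLambda_rep (f : genL -> A) (g : genR -> A) :
  \sum_(x <- DeltaLambda_rep) x.1.1 *: ((\prod_(l <- x.1.2) f l) * \prod_(r <- x.2) g r)
  = (IL_row f *m IR_col g) 0 0.
Proof.
rewrite /DeltaLambda_rep !big_cons !big_nil /= !mulr1 !mxE !big_ord_recl big_ord0 !mxE /=.
by rewrite !scale1r mulrBr -!scalerAr scaleNr !addrA.
Qed.

Lemma tauR_IR_col (c d : copy A) : q != 0 ->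
  IR_col (tauR q c d) = coaction_mx c *m IR_col (evalR q d).
Proof.
move=> q0; apply/matrixP => i j; rewrite !mxE !big_ord_recl big_ord0 !mxE /=.
case: i => [[|[|[|[|//]]]] ?] /=;
  rewrite !(mul0r, mul1r, add0r, addr0) -?scalerAl -?scalerAr ?scalerA //.
- by rewrite -scaleNr; congr (_ + _ *: _); field.
- rewrite scalerBr opprD opprK addrA scalerA.
  by congr (_ + _ *: _); field.
- rewrite mulrBr -scalerAr !(@scalerBr K A) !scalerDr !scalerN !scalerA -!scaleNr.
  rewrite -[LHS]addrA [RHS]addrC [X in _ = _ + X]addrC.
  by congr (_ + _ *: _ + (_ *: _ + _ *: _)); field.
Qed.

Lemma tauL_IL_row (c d : copy A) :
  IL_row (tauL q c d) = IL_row (evalL q c) *m coaction_mx d.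
Proof.
apply/matrixP => i j; rewrite !mxE !big_ord_recl big_ord0 !mxE /=.
case: j => [[|[|[|[|//]]]] ?] /=;
  rewrite !(mulr0, mulr1, add0r, addr0) -?scalerAr ?scaleNr //.
by rewrite addrC; congr (_ + _); rewrite addrC; congr (_ + _); rewrite addrC.
Qed.

Lemma DeltaLambda_row_col (c d : copy A) :
  cK c * cF c = q ^- 2 *: (cF c * cK c) -> cF c * cE d = cE d * cF c ->
  DeltaLambda q c d = (IL_row (evalL q c) *m IR_col (evalR q d)) 0 0.
Proof.
move=> KF FE; rewrite !mxE !big_ord_recl big_ord0 !mxE /= addr0.
have KEF : cK c * cE d * (cF c * cKi d) = q ^- 2 *: (cF c * cK c * (cE d * cKi d)).
  by rewrite -mulrA [cE d * _]mulrA -FE !mulrA KF -!scalerAl.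
rewrite /DeltaLambda /casimir mulrDl !mulrDr KEF !mulrDl.
rewrite -!scalerAl -!scalerAr !scalerDr !scalerA mulrN !mulrA -scalerAr.
have KKi_cancel : q^-1 *: (cK c * cKi d) + q *: (cK c * cKi d)
                    - (q + q^-1) *: (cK c * cKi d) = 0.
  by rewrite -scalerDl -scalerBl [q^-1 + q]addrC subrr scale0r.
by rewrite !addrA [RHS](ACl (1*8*9*4*5*3*(2*6*7))) /= KKi_cancel addr0.
Qed.

Lemma DeltaLambda_rep_cotensor (c1 c2 c3 : copy A) : q != 0 ->
  \sum_(x <- DeltaLambda_rep) x.1.1 *: ((\prod_(l <- x.1.2) evalL q c1 l)
                                        * \prod_(r <- x.2) tauR q c2 c3 r)
  = \sum_(x <- DeltaLambda_rep) x.1.1 *: ((\prod_(l <- x.1.2) tauL q c1 c2 l)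
                                          * \prod_(r <- x.2) evalR q c3 r).
Proof.
by move=> q0; rewrite !big_DeltaLambda_rep tauR_IR_col // mulmxA -tauL_IL_row.
Qed.

End Casimir.

Theorem corollary2p5 (K : fieldType) (q : K) (hq0 : q != 0)
    (hq : not_root_of_unity q) :
  exists rep : seq (K * seq genL * seq genR),
    (* Delta(Lambda) = sum_i a_i * (l_i (x) r_i) with l_i in I_L, r_i in I_R *)
    (forall (A : algType K) (c1 c2 : copy A),
        Uq_rel q c1 -> Uq_rel q c2 -> commute_copies c1 c2 ->
        DeltaLambda q c1 c2 =
        \sum_(x <- rep) x.1.1 *: ((\prod_(g <- x.1.2) evalL q c1 g)
                                   * \prod_(g <- x.2) evalR q c2 g))
    /\
    (* (1 (x) tau_R)(Delta(Lambda)) = (tau_L (x) 1)(Delta(Lambda)) in U^{(x)3} *)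
    (forall (A : algType K) (c1 c2 c3 : copy A),
        Uq_rel q c1 -> Uq_rel q c2 -> Uq_rel q c3 ->
        commute_copies c1 c2 -> commute_copies c1 c3 -> commute_copies c2 c3 ->
        \sum_(x <- rep) x.1.1 *: ((\prod_(g <- x.1.2) evalL q c1 g)
                                   * \prod_(g <- x.2) tauR q c2 c3 g)
        = \sum_(x <- rep) x.1.1 *: ((\prod_(g <- x.1.2) tauL q c1 c2 g)
                                     * \prod_(g <- x.2) evalR q c3 g)).
Proof.
exists (DeltaLambda_rep q); split.
- move=> A c1 c2 [_ _ _ KF1 _] _ c12.
  rewrite big_DeltaLambda_rep DeltaLambda_row_col //.
  by apply: c12; rewrite !inE eqxx ?orbT.
- by move=> A c1 c2 c3 *; apply: DeltaLambda_rep_cotensor.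
Qed.
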